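(* Let $F$ be a complete, algebraically closed non-Archimedean valued field with absolute value $|\cdot|$, and let $f=\sum_j f_jX^j\in F[[X,X^{-1}]]$ be a non-zero Laurent series with $|f_j|\to0$ as $|j|\to\infty$. Let $k_1,k_2\in\mathbb{Z}$, not both zero, and let $B\in\mathbb{Z}_{>0}$ with $|k_1|,|k_2|\le B$. Then for any $b\in F$ with $|b|=1$, the Laurent series $$a(X):=f(X^{k_1})-bX^{k_2}$$ is either identically zero or has at most $c_fB$ zeroes (counted with multiplicity) of absolute value $1$ in $F$, where the constant $c_f$ is defined as follows: (i) if $|f|_1>1$, then $c_f=K(f,1)-k(f,1)$; (ii) if $|f|_1<1$, then $c_f=0$; (iii) if $|f|_1=1$ and $K(f,1)\neq k(f,1)$, then $c_f=2\max(|K(f,1)|,|k(f,1)|)$; (iv) if $|f|_1=1$ and $K(f,1)=k(f,1)$, then $c_f=2\max(|K(f,1)|,1)$ if $\tilde f=0$, and $c_f=2\max(|K(f,1)|,|K(\tilde f,1)|,|k(\tilde f,1)|,1)$ otherwise, where $\tilde f:=\sum_{j\neq k(f,1)} f_jX^j$.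
   Context: For a Laurent series $g=\sum_n g_nX^n$ with $|g_n|\to 0$ as $|n|\to\infty$, define $|g|_1:=\sup_{n}|g_n|$, $K(g,1):=\sup\{n\in\mathbb{Z}: |g_n|=|g|_1\}$ and $k(g,1):=\inf\{n\in\mathbb{Z}: |g_n|=|g|_1\}$ (the largest and smallest index of a coefficient of maximal absolute value). *)

From mathcomp Require Import all_boot all_order all_algebra.
From mathcomp Require Import boolp classical_sets reals.
Set Implicit Arguments. Unset Strict Implicit. Unset Printing Implicit Defensive.
Import Order.TTheory GRing.Theory Num.Theory.
Local Open Scope ring_scope.

Section Defs.
Variables (R : realType) (F : closedFieldType) (absF : F -> R).

Definition nonarch_abs : Prop :=
  [/\ forall x, 0 <= absF x,
      forall x, absF x = 0 <-> x = 0,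
      forall x y, absF (x * y) = absF x * absF y
    & forall x y, absF (x + y) <= Num.max (absF x) (absF y)].

Definition complete_abs : Prop :=
  forall u : nat -> F,
    (forall e : R, 0 < e -> exists N : nat, forall m n : nat,
        (N <= m)%N -> (N <= n)%N -> absF (u m - u n) < e) ->
    exists l : F, forall e : R, 0 < e -> exists N : nat, forall n : nat,
        (N <= n)%N -> absF (u n - l) < e.

(* Laurent series g = sum_n g n X^n, represented by the coefficient map *)
Definition coef_null (g : int -> F) : Prop :=
  forall e : R, 0 < e -> exists N : nat, forall n : int,
      (N <= `|n|)%N -> absF (g n) < e.

Definition norm1 (g : int -> F) : R := sup [set absF (g n) | n in [set: int]].

Definition Kidx (g : int -> F) : int :=
  xget 0 [set K : int | absF (g K) = norm1 g /\
                        forall n, absF (g n) = norm1 g -> n <= K].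

Definition kidx (g : int -> F) : int :=
  xget 0 [set k : int | absF (g k) = norm1 g /\
                        forall n, absF (g n) = norm1 g -> k <= n].

Definition ftilde (f : int -> F) : int -> F :=
  fun j => if j == kidx f then 0 else f j.

Definition cf (f : int -> F) : int :=
  if norm1 f > 1 then Kidx f - kidx f
  else if norm1 f < 1 then 0
  else if Kidx f != kidx f then 2 * Num.max `|Kidx f| `|kidx f|
  else if asbool (forall j, ftilde f j = 0) then 2 * Num.max `|Kidx f| 1
  else 2 * Num.max (Num.max `|Kidx f| `|Kidx (ftilde f)|)
                   (Num.max `|kidx (ftilde f)| 1).

Definition psum (g : int -> F) (N : nat) : F :=
  \sum_(i < (N + N).+1) g (i%:Z - N%:Z).

(* sum_j g j (the limit of the partial sums; it exists for null g in
   a complete non-Archimedean field) *)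
Definition lsum (g : int -> F) : F :=
  xget 0 [set s : F | forall e : R, 0 < e -> exists N : nat, forall n : nat,
                        (N <= n)%N -> absF (psum g n - s) < e].

(* coefficients of f(X^k1) *)
Definition comp_pow (f : int -> F) (k1 : int) : int -> F :=
  fun n => if k1 == 0 then (if n == 0 then lsum f else 0)
           else if (k1 %| n)%Z then f (n %/ k1)%Z else 0.

Definition aser (f : int -> F) (k1 k2 : int) (b : F) : int -> F :=
  fun n => comp_pow f k1 n - (if n == k2 then b else 0).

Definition mulXsub (z : F) (g : int -> F) : int -> F :=
  fun n => g (n - 1) - z * g n.

(* (X - z)^m divides a in the ring of Laurent series with null coefficients,
   i.e. z is a zero of a of multiplicity at least m *)
Definition mult_ge (a : int -> F) (z : F) (m : nat) : Prop :=
  exists g : int -> F, coef_null g /\ a = iter m (mulXsub z) g.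

End Defs.

From mathcomp Require Import all_boot all_order all_algebra.
From mathcomp Require Import boolp classical_sets reals.
From mathcomp Require Import zify ring lra.
Import Order.TTheory GRing.Theory Num.Theory.
Local Open Scope ring_scope.
Set Implicit Arguments. Unset Strict Implicit.

(* A nonzero null Laurent series g has a coefficient of maximal size M = |g|_1,
   attained exactly between the indices k(g,1) <= K(g,1).  Since the absolute
   value is ultrametric, multiplying by X - z with |z| = 1 raises K(g,1) by one
   and keeps k(g,1) and M.  Zeros on the unit circle can be divided out in the
   ring of null Laurent series, so a = (X - z_1)...(X - z_N) g and therefore
   N <= K(a,1) - k(a,1).  It remains to bound K(a,1) - k(a,1) for
   a = f(X^k1) - b X^k2: in each case of the definition of c_f some coefficient
   of a strictly dominates all coefficients outside an interval of length at
   most c_f B, and that interval must then contain both K(a,1) and k(a,1). *)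

Section LaurentSeries.
Variables (R : realType) (F : closedFieldType) (absF : F -> R).
Hypothesis Habs : nonarch_abs absF.

Lemma absF_ge0 x : 0 <= absF x. Proof. by case: Habs. Qed.
Lemma absF_eq0 x : absF x = 0 <-> x = 0. Proof. by case: Habs. Qed.
Lemma absFM x y : absF (x * y) = absF x * absF y. Proof. by case: Habs. Qed.
Lemma absFD_max x y : absF (x + y) <= Num.max (absF x) (absF y). Proof. by case: Habs. Qed.

Lemma absF0 : absF 0 = 0. Proof. exact/absF_eq0. Qed.

Lemma absF_gt0 x : x != 0 -> 0 < absF x.
Proof. by move=> x0; rewrite lt_neqAle absF_ge0 andbT eq_sym; apply: contra x0 => /eqP/absF_eq0->. Qed.

Lemma absF1 : absF 1 = 1.
Proof.
have h := absFM 1 1; rewrite mulr1 in h.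
have := absF_gt0 (oner_neq0 F); nra.
Qed.

Lemma absFN x : absF (- x) = absF x.
Proof.
have hN1 : absF (-1) = 1.
  by have := absFM (-1) (-1); have := absF_ge0 (-1); rewrite mulrNN mulr1 absF1; nra.
by rewrite -mulN1r absFM hN1 mul1r.
Qed.

Lemma absFB_max x y : absF (x - y) <= Num.max (absF x) (absF y).
Proof. by rewrite -(absFN y) absFD_max. Qed.

Lemma absFD_eq x y : absF y < absF x -> absF (x + y) = absF x.
Proof.
move=> yx; apply/le_anti/andP; split.
  by apply: le_trans (absFD_max _ _) _; rewrite ge_max lexx ltW.
have := absFB_max (x + y) y; rewrite addrK le_max => /orP[//|xy].
by have := lt_le_trans yx xy; rewrite ltxx.
Qed.

Lemma absFD_lt x y e : absF x < e -> absF y < e -> absF (x + y) < e.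
Proof. by move=> hx hy; apply: le_lt_trans (absFD_max _ _) _; rewrite gt_max hx hy. Qed.

Lemma absFB_lt x y e : absF x < e -> absF y < e -> absF (x - y) < e.
Proof. by move=> hx hy; apply: absFD_lt; rewrite ?absFN. Qed.

Lemma absFD_le x y e : absF x <= e -> absF y <= e -> absF (x + y) <= e.
Proof. by move=> hx hy; apply: le_trans (absFD_max _ _) _; rewrite ge_max hx hy. Qed.

Lemma absFB_le x y e : absF x <= e -> absF y <= e -> absF (x - y) <= e.
Proof. by move=> hx hy; apply: absFD_le; rewrite ?absFN. Qed.

Lemma absF_sum_le (I : Type) (r : seq I) (P : pred I) (G : I -> F) e :
  0 <= e -> (forall i, P i -> absF (G i) <= e) -> absF (\sum_(i <- r | P i) G i) <= e.
Proof.
move=> e0 hG; elim/big_rec: _ => [|i x Pi hx]; first by rewrite absF0.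
exact: absFD_le (hG _ Pi) hx.
Qed.

Lemma absF_sum_lt (I : Type) (r : seq I) (P : pred I) (G : I -> F) e :
  0 < e -> (forall i, P i -> absF (G i) < e) -> absF (\sum_(i <- r | P i) G i) < e.
Proof.
move=> e0 hG; elim/big_rec: _ => [|i x Pi hx]; first by rewrite absF0.
exact: absFD_lt (hG _ Pi) hx.
Qed.

Lemma coef_nullB g h : coef_null absF g -> coef_null absF h ->
  coef_null absF (fun n => g n - h n).
Proof.
move=> hg hh e e0; have [N1 h1] := hg e e0; have [N2 h2] := hh e e0.
by exists (maxn N1 N2) => n hn; apply: absFB_lt; [apply: h1|apply: h2]; lia.
Qed.

Lemma coef_nullZ (c : F) g : coef_null absF g -> coef_null absF (fun n => c * g n).
Proof.
move=> hg e e0; have c1 : 0 < absF c + 1 by have := absF_ge0 c; lra.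
have [N hN] := hg _ (divr_gt0 e0 c1); exists N => n /hN.
rewrite absFM ltr_pdivlMr // => hgn.
by have := absF_ge0 c; have := absF_ge0 (g n); nra.
Qed.

Lemma coef_null_shift g : coef_null absF g -> coef_null absF (fun n => g (n - 1)).
Proof. by move=> hg e e0; have [N hN] := hg e e0; exists N.+1 => n hn; apply: hN; lia. Qed.

Lemma coef_null_mulXsub z g : coef_null absF g -> coef_null absF (mulXsub z g).
Proof. by move=> hg; apply: coef_nullB; [apply: coef_null_shift|apply: coef_nullZ]. Qed.

Lemma coef_null_foldr_mulXsub zs g :
  coef_null absF g -> coef_null absF (foldr (@mulXsub F) g zs).
Proof. by move=> hg; elim: zs => //= z zs; apply: coef_null_mulXsub. Qed.

Lemma iter_mulXsub m z g : iter m (mulXsub z) g = foldr (@mulXsub F) g (nseq m z).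
Proof. by elim: m => //= m ->. Qed.

Lemma coef_null_mult_ge a z m : mult_ge absF a z m -> coef_null absF a.
Proof. by case=> g [hg ->]; rewrite iter_mulXsub; apply: coef_null_foldr_mulXsub. Qed.

Record dominant (g : int -> F) (M : R) (K k : int) : Prop := Dominant {
  dom_gt0 : 0 < M;
  dom_le : forall n, absF (g n) <= M;
  dom_atK : absF (g K) = M;
  dom_atk : absF (g k) = M;
  dom_gtK : forall n, K < n -> absF (g n) < M;
  dom_ltk : forall n, n < k -> absF (g n) < M }.

Lemma dominant_idx_le g M K k : dominant g M K k -> k <= K.
Proof. by case=> _ _ _ hk hgt _; rewrite leNgt; apply/negP => /hgt; rewrite hk ltxx. Qed.

Lemma dominant_mulXsub z g M K k : absF z = 1 ->
  dominant g M K k -> dominant (mulXsub z g) M (K + 1) k.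
Proof.
move=> z1 [M0 hle hK hk hgt hlt]; rewrite /mulXsub.
have absFzM n : absF (z * g n) = absF (g n) by rewrite absFM z1 mul1r.
split => // [n|||n hn|n hn].
- by apply: absFB_le; rewrite ?absFzM.
- by rewrite addrK absFD_eq hK // absFN absFzM; apply: hgt; lia.
- by rewrite addrC absFD_eq ?absFN absFzM ?hk //; apply: hlt; lia.
- by apply: absFB_lt; rewrite ?absFzM; apply: hgt; lia.
- by apply: absFB_lt; rewrite ?absFzM; apply: hlt; lia.
Qed.

Lemma dominant_foldr_mulXsub zs g M K k : all (fun z => absF z == 1) zs ->
  dominant g M K k -> dominant (foldr (@mulXsub F) g zs) M (K + (size zs)%:Z) k.
Proof.
move=> + hg; elim: zs => [|z zs IH] /=; first by rewrite addr0.
case/andP=> /eqP z1 /IH hzs.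
have -> : K + (size zs).+1%:Z = K + (size zs)%:Z + 1 by lia.
exact: dominant_mulXsub.
Qed.

Lemma coef_null_dominant g : coef_null absF g -> (exists n, g n != 0) ->
  exists M K k, dominant g M K k.
Proof.
move=> hg [n0 gn0]; have [N hN] := hg _ (absF_gt0 gn0).
have n0N : (`|n0| < N)%N by rewrite ltnNge; apply/negP => /hN; rewrite ltxx.
pose idx (i : 'I_(N + N).+1) : int := (i : nat)%:Z - N%:Z.
have idxP n : (`|n| < N)%N -> exists i, idx i = n.
  by move=> nN; exists (inord (absz (n + N%:Z))); rewrite /idx inordK; lia.
have [i0 i0n0] := idxP n0 n0N.
pose G i := absF (g (idx i)).
have [im _ Gmax] := @arg_maxP _ _ _ i0 predT G isT; set M := G im.
have gn0M : absF (g n0) <= M by rewrite -i0n0; apply: Gmax.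
have gM n : absF (g n) <= M.
  have [/idxP[i <-]|/hN gn] := ltnP `|n| N; [exact: Gmax|exact: le_trans (ltW gn) gn0M].
have atM n : absF (g n) = M -> exists i, [/\ idx i = n & G i == M].
  move=> gnM; have [|i ein] := idxP n; last by exists i; rewrite /G ein gnM.
  by rewrite ltnNge; apply/negP => /hN; rewrite gnM => /lt_le_trans/(_ gn0M); rewrite ltxx.
have PM : [pred i | G i == M] im by rewrite /= eqxx.
have [iK /eqP hK maxK] := @arg_maxP _ _ _ im [pred i | G i == M] (@nat_of_ord _) PM.
have [ik /eqP hk mink] := @arg_minP _ _ _ im [pred i | G i == M] (@nat_of_ord _) PM.
exists M, (idx iK), (idx ik); split => // [|n hn|n hn].
- exact: lt_le_trans (absF_gt0 gn0) gn0M.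
- rewrite lt_neqAle gM andbT; apply/eqP => /atM[j [ejn /maxK]].
  by rewrite -ejn /idx in hn; lia.
- rewrite lt_neqAle gM andbT; apply/eqP => /atM[j [ejn /mink]].
  by rewrite -ejn /idx in hn; lia.
Qed.

Lemma norm1_dominant g M K k : dominant g M K k -> norm1 absF g = M.
Proof.
case=> _ hle hK _ _ _; apply/le_anti/andP; split.
  by apply: ge_sup => [|_ [n _ <-]]; first by exists (absF (g K)), K.
by rewrite -hK; apply: ub_le_sup; [exists M => _ [n _ <-]|exists K].
Qed.

Lemma Kidx_dominant g M K k : dominant g M K k -> Kidx absF g = K.
Proof.
move=> hd; rewrite /Kidx (norm1_dominant hd); case: hd => _ _ hK _ hgt _.
apply: xget_unique => [|K' [hK' maxK']].
  by split => // n gnM; rewrite leNgt; apply/negP => /hgt; rewrite gnM ltxx.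
apply/le_anti; rewrite maxK' // andbT leNgt; apply/negP => /hgt.
by rewrite hK' ltxx.
Qed.

Lemma kidx_dominant g M K k : dominant g M K k -> kidx absF g = k.
Proof.
move=> hd; rewrite /kidx (norm1_dominant hd); case: hd => _ _ _ hk _ hlt.
apply: xget_unique => [|k' [hk' mink']].
  by split => // n gnM; rewrite leNgt; apply/negP => /hlt; rewrite gnM ltxx.
apply/le_anti; rewrite mink' // leNgt; apply/negP => /hlt.
by rewrite hk' ltxx.
Qed.

Lemma dominant_span_le g M K k L U n0 : dominant g M K k -> L <= n0 <= U ->
  (forall n, (n < L) || (U < n) -> absF (g n) < absF (g n0)) -> K - k <= U - L.
Proof.
case=> _ hle hK hk _ _ /andP[Ln0 n0U] hout.
have inside n : absF (g n) = M -> L <= n <= U.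
  move=> gnM; apply/negbNE/negP; rewrite negb_and -!ltNge => /hout.
  by rewrite gnM => /lt_le_trans/(_ (hle n0)); rewrite ltxx.
by have := inside _ hK; have := inside _ hk; lia.
Qed.

Lemma dominant_support_span_le g M K k L U : dominant g M K k ->
  (forall n, (n < L) || (U < n) -> g n = 0) -> K - k <= U - L.
Proof.
case=> M0 _ hK hk _ _ hout.
have inside n : absF (g n) = M -> L <= n <= U.
  move=> gnM; apply/negbNE/negP; rewrite negb_and -!ltNge => /hout.
  by move/absF_eq0; rewrite gnM => M00; move: M0; rewrite M00 ltxx.
by have := inside _ hK; have := inside _ hk; lia.
Qed.

Lemma mulXsubC (z w : F) g : mulXsub z (mulXsub w g) = mulXsub w (mulXsub z g).
Proof. by apply: funext => n; rewrite /mulXsub; ring. Qed.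

Lemma foldr_mulXsubC zs w g :
  foldr (@mulXsub F) (mulXsub w g) zs = mulXsub w (foldr (@mulXsub F) g zs).
Proof. by elim: zs => //= z zs ->; rewrite mulXsubC. Qed.

Lemma foldr_mulXsub0 zs : foldr (@mulXsub F) (fun _ => 0) zs = (fun _ => 0).
Proof. by elim: zs => //= z zs ->; apply: funext => n; rewrite /mulXsub mulr0 subr0. Qed.

Lemma mulXsub_eq0 w u : absF w = 1 -> coef_null absF u ->
  mulXsub w u = (fun _ => 0) -> u = (fun _ => 0).
Proof.
move=> w1 hu u0; apply: funext => n0; apply/eqP/negPn/negP => un0.
have absF_succ n : absF (u n) = absF (u (n + 1)).
  have /eqP := congr1 (fun g => g (n + 1)) u0.
  by rewrite /mulXsub addrK subr_eq0 => /eqP ->; rewrite absFM w1 mul1r.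
have absF_shift (j : nat) : absF (u (n0 + j%:Z)) = absF (u n0).
  elim: j => [|j IH]; first by rewrite addr0.
  by rewrite -IH [RHS]absF_succ -addrA; congr (absF (u (n0 + _))); lia.
have [N hN] := hu _ (absF_gt0 un0).
have : (N <= `|(n0 + (absz n0 + N)%N%:Z)%R|)%N by lia.
by move/hN; rewrite absF_shift ltxx.
Qed.

Lemma mulXsub_inj w u v : absF w = 1 -> coef_null absF u -> coef_null absF v ->
  mulXsub w u = mulXsub w v -> u = v.
Proof.
move=> w1 hu hv euv.
have /(mulXsub_eq0 w1 (coef_nullB hu hv)) uv0 : mulXsub w (fun n => u n - v n) = (fun _ => 0).
  apply: funext => n; have := congr1 (fun g => g n) euv; rewrite /mulXsub => e.
  by rewrite -(subrr (v (n - 1) - w * v n)) -{1}e; ring.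
by apply: funext => n; apply/eqP; rewrite -subr_eq0; have -> := congr1 (fun g => g n) uv0.
Qed.

(* From (X - z) g = (X - w) h one gets (X - w) (h - g) = (w - z) g. *)
Lemma mulXsub_eq_mulXsub (z w : F) g h : z != w -> mulXsub z g = mulXsub w h ->
  g = mulXsub w (fun n => (w - z)^-1 * (h n - g n)).
Proof.
move=> zw e; apply: funext => n; have := congr1 (fun g => g n) e; rewrite /mulXsub => en.
have -> : h (n - 1) = g (n - 1) - z * g n + w * h n by rewrite en; ring.
by field; rewrite subr_eq0 eq_sym.
Qed.

Lemma mult_ge1_foldr_mulXsub zs w g : w \notin zs -> coef_null absF g ->
  mult_ge absF (foldr (@mulXsub F) g zs) w 1 -> mult_ge absF g w 1.
Proof.
move=> + hg; elim: zs => [|z zs IH] //=.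
rewrite in_cons negb_or => /andP[wz /IH{}IH] [h [hh /= e]]; apply: IH.
move: e => /mulXsub_eq_mulXsub; rewrite eq_sym => /(_ wz) e.
exists (fun n => (w - z)^-1 * (h n - foldr (@mulXsub F) g zs n)); split => //.
by apply: coef_nullZ; apply: coef_nullB => //; apply: coef_null_foldr_mulXsub.
Qed.

Lemma mult_ge_foldr_mulXsub m zs w g : absF w = 1 -> w \notin zs -> coef_null absF g ->
  mult_ge absF (foldr (@mulXsub F) g zs) w m -> mult_ge absF g w m.
Proof.
move=> w1 wzs; elim: m g => [|m IH] g hg; first by exists g.
case=> h [hh e].
have [|g1 [hg1 eg]] := mult_ge1_foldr_mulXsub wzs hg.
  exists (iter m (mulXsub w) h); split; last exact: e.
  by rewrite iter_mulXsub; apply: coef_null_foldr_mulXsub.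
have e1 : foldr (@mulXsub F) g1 zs = iter m (mulXsub w) h.
  apply: (mulXsub_inj w1); rewrite ?iter_mulXsub; [exact: coef_null_foldr_mulXsub..|].
  by rewrite -foldr_mulXsubC -[mulXsub w g1]/(iter 1 (mulXsub w) g1) -eg e iter_mulXsub.
have [g2 [hg2 eg1]] := IH g1 hg1 (ex_intro _ h (conj hh e1)).
by exists g2; rewrite eg eg1.
Qed.

Lemma mult_ge_factor a s (m : F -> nat) : coef_null absF a -> uniq s ->
  (forall z, z \in s -> absF z = 1 /\ mult_ge absF a z (m z)) ->
  exists zs g, [/\ coef_null absF g, a = foldr (@mulXsub F) g zs,
    size zs = (\sum_(z <- s) m z)%N, all (fun z => absF z == 1) zs & {subset zs <= s}].
Proof.
move=> ha; elim: s => [|x s IH]; first by exists [::], a; rewrite big_nil.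
case/andP=> xs us hs.
have [|zs [g [hg ea hsize zs1 zss]]] := IH us.
  by move=> z zs; apply: hs; rewrite in_cons zs orbT.
have [x1 hx] := hs x (mem_head _ _).
have xzs : x \notin zs by apply: contra xs => /zss.
rewrite ea in hx; have [g2 [hg2 eg]] := mult_ge_foldr_mulXsub x1 xzs hg hx.
exists (zs ++ nseq (m x) x), g2; split => //.
- by rewrite foldr_cat -iter_mulXsub -eg.
- by rewrite size_cat size_nseq hsize big_cons addnC.
- by rewrite all_cat zs1 /=; apply/allP => y /nseqP[-> _]; rewrite x1.
- move=> y; rewrite mem_cat in_cons => /orP[/zss->|/nseqP[-> _]]; by rewrite ?eqxx ?orbT.
Qed.

Lemma psumS (g : int -> F) p : psum g p.+1 = psum g p + g p.+1%:Z + g (- p.+1%:Z).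
Proof.
rewrite /psum; have -> : ((p.+1 + p.+1).+1 = (p + p).+3)%N by lia.
rewrite big_ord_recr big_ord_recl /=.
have -> : (p + p).+2%:Z - p.+1%:Z = p.+1%:Z by lia.
have -> : 0%:Z - p.+1%:Z = - p.+1%:Z by lia.
rewrite (eq_bigr (fun i : 'I__ => g (i%:Z - p%:Z))); first by ring.
by move=> i _; rewrite /bump /=; congr g; lia.
Qed.

Lemma psum_cauchy g e : coef_null absF g -> 0 < e -> exists N : nat, forall m n : nat,
  (N <= m)%N -> (N <= n)%N -> absF (psum g m - psum g n) < e.
Proof.
move=> hg e0; have [N hN] := hg e e0; exists N.
have tail n d : (N <= n)%N -> absF (psum g (n + d) - psum g n) < e.
  move=> Nn; elim: d => [|d IH]; first by rewrite addn0 subrr absF0.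
  have gpos : absF (g (n + d).+1%:Z) < e by apply: hN; lia.
  have gneg : absF (g (- (n + d).+1%:Z)) < e by apply: hN; lia.
  rewrite addnS psumS.
  set a := g _; set b := g _; set S := psum g (n + d).
  have -> : S + a + b - psum g n = a + (b + (S - psum g n)) by ring.
  by apply: absFD_lt => //; apply: absFD_lt.
move=> m n Nm Nn; have [nm|mn] := leqP n m; first by rewrite -(subnKC nm) tail.
by rewrite -absFN opprB -(subnKC (ltnW mn)) tail.
Qed.

Hypothesis Hcomp : complete_abs absF.

Lemma psum_cvg_lsum g : coef_null absF g -> forall e : R, 0 < e ->
  exists N : nat, forall n : nat, (N <= n)%N -> absF (psum g n - lsum absF g) < e.
Proof.
move=> hg; apply: (xgetPex 0 (P := fun s => forall e : R, 0 < e -> exists N : nat,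
  forall n : nat, (N <= n)%N -> absF (psum g n - s) < e)).
by apply: Hcomp => e; apply: psum_cauchy.
Qed.

Lemma absF_lsum_le g M K k : coef_null absF g -> dominant g M K k -> absF (lsum absF g) <= M.
Proof.
move=> hg hd; have [N /(_ N (leqnn N)) /ltW hN] := psum_cvg_lsum hg (dom_gt0 hd).
rewrite -[lsum _ _](subKr (psum g N)); apply: absFB_le => //.
by rewrite /psum; apply: absF_sum_le => [|i _]; [apply: ltW (dom_gt0 hd)|exact: (dom_le hd)].
Qed.

Lemma absF_psum_dominant g M K p : dominant g M K K -> (`|K| <= p)%N -> absF (psum g p) = M.
Proof.
case=> M0 _ hK _ hgt hlt Kp; rewrite /psum.
have Kp1 : (absz (K + p%:Z)%R < (p + p).+1)%N by lia.
have idxK : (absz (K + p%:Z))%:Z - p%:Z = K by lia.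
rewrite (bigD1 (Ordinal Kp1)) //= idxK absFD_eq hK //.
apply: absF_sum_lt => // i /eqP iK.
have [/hlt|/hgt|eiK] // := ltgtP (i%:Z - p%:Z) K.
by case: iK; apply: val_inj => /=; lia.
Qed.

Lemma absF_lsum_dominant g M K : coef_null absF g -> dominant g M K K ->
  absF (lsum absF g) = M.
Proof.
move=> hg hd; have [N hN] := psum_cvg_lsum hg (dom_gt0 hd).
have small := hN _ (leq_maxl N `|K|).
have psumM := absF_psum_dominant hd (leq_maxr N `|K|).
by rewrite -[lsum _ _](subKr (psum g (maxn N `|K|))) absFD_eq psumM // absFN.
Qed.

Lemma comp_pow_mul f k1 j : k1 != 0 -> comp_pow absF f k1 (k1 * j) = f j.
Proof. by move=> k10; rewrite /comp_pow (negbTE k10) dvdz_mulr ?dvdzz // mulKz. Qed.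

Lemma comp_pow_cases f k1 n : k1 != 0 ->
  comp_pow absF f k1 n = 0 \/ exists2 j, n = k1 * j & comp_pow absF f k1 n = f j.
Proof.
move=> k10; rewrite /comp_pow (negbTE k10); case: ifP => [k1n|_]; last by left.
by right; exists (n %/ k1)%Z; rewrite // mulrC divzK.
Qed.

Lemma comp_pow_le f k1 M K k n : k1 != 0 -> dominant f M K k ->
  absF (comp_pow absF f k1 n) <= M.
Proof.
move=> k10 hf; have [->|[j _ ->]] := comp_pow_cases f n k10; last exact: dom_le hf j.
by rewrite absF0 ltW // (dom_gt0 hf).
Qed.

Lemma comp_pow_lt_out f k1 M K k n : k1 != 0 -> dominant f M K k ->
  (n < Num.min (k1 * k) (k1 * K)) || (Num.max (k1 * k) (k1 * K) < n) ->
  absF (comp_pow absF f k1 n) < M.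
Proof.
move=> k10 hf; have [-> _|[j -> -> nout]] := comp_pow_cases f n k10.
  by rewrite absF0 (dom_gt0 hf).
have [/(dom_ltk hf)//|kj] := ltP j k; have [/(dom_gtK hf)//|jK] := ltP K j.
exfalso; move: nout; have [k1_ge0|/ltW k1_le0] := lerP 0 k1.
  by have := ler_wpM2l k1_ge0 kj; have := ler_wpM2l k1_ge0 jK; lia.
by have := ler_wnM2l k1_le0 kj; have := ler_wnM2l k1_le0 jK; lia.
Qed.

Lemma comp_pow_ftilde f k1 M K k n : k1 != 0 -> dominant f M K k -> n != k1 * k ->
  comp_pow absF (ftilde absF f) k1 n = comp_pow absF f k1 n.
Proof.
move=> k10 hf nk; rewrite /comp_pow /ftilde (negbTE k10) (kidx_dominant hf).
case: ifP => // /divzK nE; case: eqP => // jk.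
by move: nk; rewrite -nE jk mulrC eqxx.
Qed.

Section AserSpan.
Variables (f : int -> F) (k1 k2 : int) (b : F) (M Ma : R) (K k Ka ka : int).
Hypotheses (hf : dominant f M K k) (k10 : k1 != 0) (b1 : absF b = 1).
Hypothesis ha : dominant (aser absF f k1 k2 b) Ma Ka ka.

Let c := comp_pow absF f k1.

Lemma aserE n : aser absF f k1 k2 b n = c n - (if n == k2 then b else 0).
Proof. by []. Qed.

Lemma aser_span_gt1 : 1 < M -> Ka - ka <= `|k1 * (K - k)|.
Proof.
move=> M1; have absb_lt n : absF (if n == k2 then b else 0) < M.
  by case: eqP; rewrite ?b1 ?absF0 // (dom_gt0 hf).
have an0 : absF (aser absF f k1 k2 b (k1 * K)) = M.
  by rewrite aserE /c comp_pow_mul // absFD_eq ?absFN ?(dom_atK hf).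
suff : Ka - ka <= Num.max (k1 * k) (k1 * K) - Num.min (k1 * k) (k1 * K).
  by rewrite mulrBr; lia.
apply: (dominant_span_le (n0 := k1 * K) ha) => [|n nout]; first lia.
by rewrite an0 aserE; apply: absFB_lt => //; apply: comp_pow_lt_out nout.
Qed.

Lemma aser_span_lt1 : M < 1 -> Ka - ka <= 0.
Proof.
move=> M1; have cn_lt1 n : absF (c n) < 1 := le_lt_trans (comp_pow_le n k10 hf) M1.
rewrite -(subrr k2); apply: (dominant_span_le (n0 := k2) ha) => [|n nk2]; first lia.
have /negbTE nk2' : n != k2 by lia.
by rewrite !aserE nk2' subr0 (eqxx k2) addrC absFD_eq absFN b1.
Qed.

Lemma aser_span_eq1 : M = 1 -> (K != k) || (k1 * K != k2) ->
  Ka - ka <= Num.max k2 (Num.max (k1 * k) (k1 * K)) - Num.min k2 (Num.min (k1 * k) (k1 * K)).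
Proof.
move=> M1 Kk; set n0 := if k1 * K != k2 then k1 * K else k1 * k.
have n0k2 : n0 != k2.
  rewrite /n0; move: Kk; case: ifP => // /negbFE/eqP <-.
  by rewrite orbF (inj_eq (mulfI k10)) eq_sym.
have an0 : absF (aser absF f k1 k2 b n0) = 1.
  rewrite aserE (negbTE n0k2) subr0 /n0 /c -M1.
  by case: ifP => _; rewrite comp_pow_mul // ?(dom_atK hf) ?(dom_atk hf).
apply: (dominant_span_le (n0 := n0) ha) => [|n nout]; first by rewrite /n0; case: ifP; lia.
have /negbTE nk2 : n != k2 by lia.
rewrite an0 aserE nk2 subr0 -M1; apply: comp_pow_lt_out hf _ => //; lia.
Qed.

Section SingleDominant.
Hypotheses (Kk : K = k) (k1K : k1 * K = k2).

Lemma aser_single_out n : n != k2 -> aser absF f k1 k2 b n = comp_pow absF (ftilde absF f) k1 n.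
Proof.
by move=> nk2; rewrite aserE (negbTE nk2) subr0 (comp_pow_ftilde k10 hf) // -Kk k1K.
Qed.

Lemma aser_span_single0 : (forall j, ftilde absF f j = 0) -> Ka - ka <= 0.
Proof.
move=> ft0; rewrite -(subrr k2); apply: (dominant_support_span_le ha) => n nout.
have /aser_single_out -> : n != k2 by lia.
by rewrite /comp_pow (negbTE k10) ft0; case: ifP.
Qed.

Lemma aser_span_single (M' : R) (K' k' : int) : dominant (ftilde absF f) M' K' k' ->
  Ka - ka <= Num.max k2 (Num.max (k1 * k') (k1 * K')) - Num.min k2 (Num.min (k1 * k') (k1 * K')).
Proof.
move=> hft; set n0 := if M' <= absF (aser absF f k1 k2 b k2) then k2 else k1 * K'.
have K'K : K' != K.
  apply/eqP => K'K; have := dom_gt0 hft.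
  by rewrite -(dom_atK hft) /ftilde (kidx_dominant hf) K'K Kk eqxx absF0 ltxx.
have an0 : M' <= absF (aser absF f k1 k2 b n0).
  rewrite /n0; case: ifP => // _; have k1K'k2 : k1 * K' != k2.
    by rewrite -k1K (inj_eq (mulfI k10)).
  by rewrite aser_single_out // comp_pow_mul // (dom_atK hft).
apply: (dominant_span_le (n0 := n0) ha) => [|n nout]; first by rewrite /n0; case: ifP; lia.
apply: lt_le_trans an0; have nk2 : n != k2 by lia.
by rewrite aser_single_out //; apply: comp_pow_lt_out hft _ => //; lia.
Qed.

End SingleDominant.
End AserSpan.

Lemma aser0E f k2 b n : aser absF f 0 k2 b n =
  (if n == 0 then lsum absF f else 0) - (if n == k2 then b else 0).
Proof. by rewrite /aser /comp_pow eqxx. Qed.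

Section AserConstSpan.
Variables (f : int -> F) (k2 : int) (b : F) (Ma : R) (Ka ka : int).
Hypotheses (k20 : k2 != 0) (b1 : absF b = 1).
Hypothesis ha : dominant (aser absF f 0 k2 b) Ma Ka ka.

Lemma aser0_span_le : Ka - ka <= `|k2|.
Proof.
suff : Ka - ka <= Num.max 0 k2 - Num.min 0 k2 by lia.
apply: (dominant_support_span_le ha) => n nout.
have /negbTE n0 : n != 0 by lia.
have /negbTE nk2 : n != k2 by lia.
by rewrite aser0E n0 nk2 subr0.
Qed.

Lemma aser0_span_le0 : absF (lsum absF f) != 1 -> Ka - ka <= 0.
Proof.
rewrite neq_lt => /orP[lsum_lt1|lsum_gt1].
  rewrite -(subrr k2); apply: (dominant_span_le (n0 := k2) ha) => [|n nout]; first lia.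
  have /negbTE nk2 : n != k2 by lia.
  rewrite !aser0E (eqxx k2) nk2 (negbTE k20) sub0r subr0 absFN b1.
  by case: eqP => _; rewrite ?absF0.
rewrite -(subrr 0); apply: (dominant_span_le (n0 := 0) ha) => [|n nout]; first lia.
have /negbTE n0 : n != 0 by lia.
rewrite !aser0E (eqxx (0 : int)) n0 [0 == k2]eq_sym (negbTE k20) subr0 sub0r absFN.
by case: eqP => _; rewrite ?b1 ?absF0 // (lt_trans ltr01).
Qed.

End AserConstSpan.

Lemma cf_ge0 f M K k : dominant f M K k -> 0 <= cf absF f.
Proof.
move=> hf; have := dominant_idx_le hf.
rewrite /cf (norm1_dominant hf) (Kidx_dominant hf) (kidx_dominant hf).
by case: ifP => _; [lia|case: ifP => _ //; case: ifP => _; [lia|case: ifP => _; lia]].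
Qed.

Lemma cf_ge1 f M K k : coef_null absF f -> dominant f M K k ->
  absF (lsum absF f) = 1 -> 1 <= cf absF f.
Proof.
move=> hfn hf lsum1; have := dominant_idx_le hf.
rewrite /cf (norm1_dominant hf) (Kidx_dominant hf) (kidx_dominant hf).
case: ifP => [M_gt1|_].
  have [Kk|] := eqVneq K k; last lia.
  by rewrite -Kk in hf; move: M_gt1; rewrite -(absF_lsum_dominant hfn hf) lsum1 ltxx.
case: ifP => [M_lt1|_]; last by case: ifP => [/eqP|_]; [lia|case: ifP => _; lia].
by move: (le_lt_trans (absF_lsum_le hfn hf) M_lt1); rewrite lsum1 ltxx.
Qed.

Lemma coef_null_ftilde f : coef_null absF f -> coef_null absF (ftilde absF f).
Proof.
move=> hfn e e0; have [N hN] := hfn e e0; exists N => n /hN.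
by rewrite /ftilde; case: ifP => // _ _; rewrite absF0.
Qed.

Lemma spread3_le (x y z C : int) : `|x| <= C -> `|y| <= C -> `|z| <= C ->
  Num.max x (Num.max y z) - Num.min x (Num.min y z) <= 2 * C.
Proof. lia. Qed.

Lemma aser0_span_le_cf f k2 b (B : nat) M K k Ma Ka ka :
  coef_null absF f -> dominant f M K k -> k2 != 0 -> `|k2| <= B%:Z -> absF b = 1 ->
  dominant (aser absF f 0 k2 b) Ma Ka ka -> Ka - ka <= cf absF f * B%:Z.
Proof.
move=> hfn hf k20 k2B b1 ha; have cf0 := cf_ge0 hf.
have [lsum1|/(aser0_span_le0 k20 b1 ha)] := eqVneq (absF (lsum absF f)) 1; last nia.
by have := cf_ge1 hfn hf lsum1; have := aser0_span_le k20 ha; nia.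
Qed.

Lemma aser_span_le_cf f k1 k2 b (B : nat) M K k Ma Ka ka :
  coef_null absF f -> dominant f M K k -> k1 != 0 ->
  `|k1| <= B%:Z -> `|k2| <= B%:Z -> absF b = 1 ->
  dominant (aser absF f k1 k2 b) Ma Ka ka -> Ka - ka <= cf absF f * B%:Z.
Proof.
move=> hfn hf k10 k1B k2B b1 ha.
have k1jB j m : `|j| <= m -> `|k1 * j| <= B%:Z * m by nia.
have kK := dominant_idx_le hf.
have span_bound x y m : `|x| <= m -> `|y| <= m -> 1 <= m ->
    Ka - ka <= Num.max k2 (Num.max (k1 * x) (k1 * y)) - Num.min k2 (Num.min (k1 * x) (k1 * y)) ->
    Ka - ka <= 2 * m * B%:Z.
  move=> xm ym m1 span; have k2m : `|k2| <= B%:Z * m by nia.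
  by have := spread3_le k2m (k1jB x m xm) (k1jB y m ym); lia.
rewrite /cf (norm1_dominant hf) (Kidx_dominant hf) (kidx_dominant hf).
case: ifP => [M_gt1|M_le1].
  by have := aser_span_gt1 hf k10 b1 ha M_gt1; have := k1jB (K - k) (K - k); lia.
case: ifP => [M_lt1|M_ge1]; first by rewrite mul0r; apply: aser_span_lt1 hf k10 b1 ha M_lt1.
have M1 : M = 1 by apply/eqP; rewrite eq_le !leNgt M_le1 M_ge1.
case: ifP => [Kk|/negbFE/eqP Kk].
  have /eqP K_neq_k := Kk.
  by apply: (span_bound k K) (aser_span_eq1 hf k10 ha M1 _); rewrite ?Kk //; lia.
have [k1K|k1K] := eqVneq (k1 * K) k2; last first.
  have := aser_span_eq1 hf k10 ha M1; rewrite k1K orbT Kk => /(_ isT) span.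
  by case: asboolP => _; apply: (span_bound k k) => //; lia.
case: asboolP => [ft0|/existsNP[j0 /eqP ftj0]].
  by have := aser_span_single0 hf k10 ha Kk k1K ft0; nia.
have [M' [K' [k' hft]]] := coef_null_dominant (coef_null_ftilde hfn) (ex_intro _ j0 ftj0).
rewrite (Kidx_dominant hft) (kidx_dominant hft).
by apply: (span_bound k' K') (aser_span_single hf k10 ha Kk k1K hft); lia.
Qed.

End LaurentSeries.

Theorem mainTheorem2 (R : realType) (F : closedFieldType) (absF : F -> R)
  (Habs : nonarch_abs absF) (Hcomp : complete_abs absF)
  (f : int -> F) (Hnull : coef_null absF f) (Hnz : exists j, f j != 0)
  (k1 k2 : int) (Hk : (k1 != 0) || (k2 != 0))
  (B : nat) (HB : (0 < B)%N) (Hk1 : `|k1| <= B%:Z) (Hk2 : `|k2| <= B%:Z)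
  (b : F) (Hb : absF b = 1) :
  aser absF f k1 k2 b = (fun _ => 0)
  \/ forall (s : seq F) (m : F -> nat),
       uniq s ->
       (forall z, z \in s -> absF z = 1 /\ mult_ge absF (aser absF f k1 k2 b) z (m z)) ->
       ((\sum_(z <- s) m z)%:Z <= cf absF f * B%:Z).
Proof.
have [M [K [k hf]]] := coef_null_dominant Habs Hnull Hnz.
have [|a_neq0] := pselect (aser absF f k1 k2 b = (fun _ => 0)); [by left|right].
case=> [|z s] m us hs; first by rewrite big_nil mulr_ge0 // (cf_ge0 hf).
have ha := coef_null_mult_ge Habs (hs z (mem_head _ _)).2.
have [zs [g [hg ea <- zs1 _]]] := mult_ge_factor Habs ha us hs.
have g_neq0 : exists n, g n != 0.
  apply: contra_notP a_neq0 => /forallNP g0; rewrite ea -(foldr_mulXsub0 zs).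
  by congr foldr; apply: funext => n; apply/eqP/negPn/negP; apply: g0.
have [Mg [Kg [kg hg_dom]]] := coef_null_dominant Habs hg g_neq0.
have := dominant_foldr_mulXsub Habs zs1 hg_dom; rewrite -ea => ha_dom.
have span : Kg + (size zs)%:Z - kg <= cf absF f * B%:Z.
  have [k10|k10] := eqVneq k1 0; last first.
    by move: (aser_span_le_cf Habs Hnull hf k10 Hk1 Hk2 Hb ha_dom).
  move: Hk ha_dom; rewrite k10 /= => k20 ha_dom.
  by move: (aser0_span_le_cf Habs Hcomp Hnull hf k20 Hk2 Hb ha_dom).
by have := dominant_idx_le hg_dom; lia.
Qed.
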